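(* Let $(\mathscr{C},\mathbb{E},\mathfrak{s})$ be an extriangulated category such that for every object $X$ the morphism $X\to 0$ is an $\mathbb{E}$-inflation and $0\to X$ is an $\mathbb{E}$-deflation, and let $\Sigma\colon\mathscr{C}\to\mathscr{C}$ be the functor constructed in the context. Then $\Sigma$ is an additive auto-equivalence of $\mathscr{C}$.
   Context: An extriangulated category $(\mathscr{C},\mathbb{E},\mathfrak{s})$ is in the sense of Nakaoka–Palu: $\mathscr{C}$ additive, $\mathbb{E}\colon\mathscr{C}^{\mathrm{op}}\times\mathscr{C}\to Ab$ biadditive, $\mathfrak{s}$ an additive realisation assigning to $\delta\in\mathbb{E}(C,A)$ an equivalence class of sequences $[A\to B\to C]$, satisfying (ET1)–(ET4)$^{\mathrm{op}}$. For $a\colon A\to A'$ and $c\colon C'\to C$ write $a_*\delta=\mathbb{E}(C,a)(\delta)$ and $c^*\delta=\mathbb{E}(c,A)(\delta)$. A morphism $x\colon A\to B$ is an $\mathbb{E}$-inflation if $\mathfrak{s}(\delta)=[A\xrightarrow{x}B\to C]$ for some $\delta\in\mathbb{E}(C,A)$; dually $y\colon B\to C$ is an $\mathbb{E}$-deflation if $\mathfrak{s}(\delta)=[A\to B\xrightarrow{y}C]$ for some $\delta$. Construction of $\Sigma$: for each object $X$, choose an object $\Sigma X$ and $\delta_X\in\mathbb{E}(\Sigma X,X)$ with $\mathfrak{s}(\delta_X)=[X\to 0\to\Sigma X]$. For a morphism $f\colon X\to Y$, $\Sigma f\colon\Sigma X\to\Sigma Y$ is the unique morphism with $f_*\delta_X=(\Sigma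 f)^*\delta_Y$; this defines a functor. *)

From HB Require Import structures.
From mathcomp Require Import all_boot all_algebra.
Set Implicit Arguments. Unset Strict Implicit. Unset Printing Implicit Defensive.
Import GRing.Theory.
Local Open Scope ring_scope.

Record CatData := {
  obj :> Type;
  Mor : obj -> obj -> zmodType;
  idm : forall X, Mor X X;
  cmp : forall X Y Z, Mor Y Z -> Mor X Y -> Mor X Z }.

Arguments idm {c} X.
Arguments cmp {c X Y Z} g f.
Notation "g ∘ f" := (cmp g f) (at level 40, left associativity).

Section CatAxioms.
Variable K : CatData.
Definition preadditive_axioms : Prop :=
  ((forall (W X Y Z : K) (h : Mor Y Z) (g : Mor X Y) (f : Mor W X),
          h ∘ (g ∘ f) = (h ∘ g) ∘ f) /\
      (forall (X Y : K) (f : Mor X Y), idm Y ∘ f = f) /\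
      (forall (X Y : K) (f : Mor X Y), f ∘ idm X = f) /\
      (forall (X Y Z : K) (g g' : Mor Y Z) (f : Mor X Y),
          (g + g') ∘ f = g ∘ f + g' ∘ f) /\
      (forall (X Y Z : K) (g : Mor Y Z) (f f' : Mor X Y),
          g ∘ (f + f') = g ∘ f + g ∘ f')).

Definition is_zero_obj (Z : K) : Prop :=
  forall X : K, (forall f g : Mor Z X, f = g) /\ (forall f g : Mor X Z, f = g).

Definition is_iso (X Y : K) (f : Mor X Y) : Prop :=
  exists g : Mor Y X, g ∘ f = idm X /\ f ∘ g = idm Y.

Definition is_biprod (A C P : K) (i1 : Mor A P) (i2 : Mor C P)
    (p1 : Mor P A) (p2 : Mor P C) : Prop :=
  p1 ∘ i1 = idm A /\ p2 ∘ i2 = idm C /\ p1 ∘ i2 = 0 /\ p2 ∘ i1 = 0 /\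
      i1 ∘ p1 + i2 ∘ p2 = idm P.

Definition has_biprods : Prop :=
  forall A C : K, exists P (i1 : Mor A P) (i2 : Mor C P) (p1 : Mor P A)
    (p2 : Mor P C), is_biprod i1 i2 p1 p2.
End CatAxioms.

Record AddCat := {
  cdata :> CatData;
  preaddP : preadditive_axioms cdata;
  zo : cdata;
  zoP : is_zero_obj zo;
  biprodP : has_biprods cdata }.

Arguments zo {a}.

(*   Ext C A  = E(C,A);  push a d = a_* d;  pull c d = c^* d;         *)
(*   realizes d x y  means  s(d) = [A -x-> B -y-> C]  (i.e. the sequence  *)
(*   lies in the equivalence class s(d)).                             *)
Record ExtData := {
  acat :> AddCat;
  Ext : acat -> acat -> zmodType;
  push : forall (C A A' : acat), Mor A A' -> Ext C A -> Ext C A';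
  pull : forall (C C' A : acat), Mor C' C -> Ext C A -> Ext C' A;
  realizes : forall (C A : acat) (d : Ext C A) (B : acat), Mor A B -> Mor B C -> Prop }.

Arguments Ext {e}.
Arguments push {e C A A'} a d.
Arguments pull {e C C' A} c d.
Arguments realizes {e C A} d {B} x y.

Section ExtAxioms.
Variable K : ExtData.

Definition seq_equiv (A B B' C : K) (x : Mor A B) (y : Mor B C)
    (x' : Mor A B') (y' : Mor B' C) : Prop :=
  exists b : Mor B B', (is_iso b /\ b ∘ x = x' /\ y' ∘ b = y).

Definition ET1 : Prop :=
  ((forall (C A A' : K) (a : Mor A A') (d d' : Ext C A),
          push a (d + d') = push a d + push a d') /\
      (forall (C A A' : K) (a a' : Mor A A') (d : Ext C A),
          push (a + a') d = push a d + push a' d) /\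
      (forall (C C' A : K) (c : Mor C' C) (d d' : Ext C A),
          pull c (d + d') = pull c d + pull c d') /\
      (forall (C C' A : K) (c c' : Mor C' C) (d : Ext C A),
          pull (c + c') d = pull c d + pull c' d) /\
      (forall (C A : K) (d : Ext C A), push (idm A) d = d) /\
      (forall (C A : K) (d : Ext C A), pull (idm C) d = d) /\
      (forall (C A A' A'' : K) (a : Mor A A') (a' : Mor A' A'') (d : Ext C A),
          push (a' ∘ a) d = push a' (push a d)) /\
      (forall (C C' C'' A : K) (c : Mor C' C) (c' : Mor C'' C') (d : Ext C A),
          pull (c ∘ c') d = pull c' (pull c d)) /\
      (forall (C C' A A' : K) (a : Mor A A') (c : Mor C' C) (d : Ext C A),
          push a (pull c d) = pull c (push a d))).

Definition is_realization : Prop :=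
  ((forall (C A : K) (d : Ext C A),
          exists (B : K) (x : Mor A B) (y : Mor B C), realizes d x y) /\
      (forall (C A B B' : K) (d : Ext C A) (x : Mor A B) (y : Mor B C)
              (x' : Mor A B') (y' : Mor B' C),
          realizes d x y -> (realizes d x' y' <-> seq_equiv x y x' y')) /\
      (forall (A B C A' B' C' : K) (d : Ext C A) (d' : Ext C' A')
              (x : Mor A B) (y : Mor B C) (x' : Mor A' B') (y' : Mor B' C')
              (a : Mor A A') (c : Mor C C'),
          realizes d x y -> realizes d' x' y' -> push a d = pull c d' ->
          exists b : Mor B B', b ∘ x = x' ∘ a /\ c ∘ y = y' ∘ b)).

Definition ET2 : Prop :=
  (is_realization /\
      (forall (A C P : K) (i1 : Mor A P) (i2 : Mor C P) (p1 : Mor P A)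
              (p2 : Mor P C),
          is_biprod i1 i2 p1 p2 -> realizes (0 : Ext C A) i1 p2) /\
      (forall (A A' B B' C C' PA PB PC : K)
              (iA : Mor A PA) (iA' : Mor A' PA) (pA : Mor PA A) (pA' : Mor PA A')
              (iB : Mor B PB) (iB' : Mor B' PB) (pB : Mor PB B) (pB' : Mor PB B')
              (iC : Mor C PC) (iC' : Mor C' PC) (pC : Mor PC C) (pC' : Mor PC C')
              (d : Ext C A) (d' : Ext C' A')
              (x : Mor A B) (y : Mor B C) (x' : Mor A' B') (y' : Mor B' C'),
          is_biprod iA iA' pA pA' -> is_biprod iB iB' pB pB' ->
          is_biprod iC iC' pC pC' ->
          realizes d x y -> realizes d' x' y' ->
          realizes (push iA (pull pC d) + push iA' (pull pC' d'))
               (iB ∘ x ∘ pA + iB' ∘ x' ∘ pA')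
               (iC ∘ y ∘ pB + iC' ∘ y' ∘ pB'))).

Definition ET3 : Prop :=
  forall (A B C A' B' C' : K) (d : Ext C A) (d' : Ext C' A')
         (x : Mor A B) (y : Mor B C) (x' : Mor A' B') (y' : Mor B' C')
         (a : Mor A A') (b : Mor B B'),
    realizes d x y -> realizes d' x' y' -> b ∘ x = x' ∘ a ->
    exists c : Mor C C', c ∘ y = y' ∘ b /\ push a d = pull c d'.

Definition ET3op : Prop :=
  forall (A B C A' B' C' : K) (d : Ext C A) (d' : Ext C' A')
         (x : Mor A B) (y : Mor B C) (x' : Mor A' B') (y' : Mor B' C')
         (b : Mor B B') (c : Mor C C'),
    realizes d x y -> realizes d' x' y' -> c ∘ y = y' ∘ b ->
    exists a : Mor A A', b ∘ x = x' ∘ a /\ push a d = pull c d'.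

Definition ET4 : Prop :=
  forall (A B C D F : K) (d : Ext D A) (d' : Ext F B)
         (f : Mor A B) (f' : Mor B D) (g : Mor B C) (g' : Mor C F),
    realizes d f f' -> realizes d' g g' ->
    exists (E : K) (h' : Mor C E) (dd : Mor D E) (e : Mor E F) (d'' : Ext E A),
      (realizes d'' (g ∘ f) h' /\ h' ∘ g = dd ∘ f' /\ e ∘ h' = g' /\
          realizes (push f' d') dd e /\ pull dd d'' = d /\ push f d'' = pull e d').

Definition ET4op : Prop :=
  forall (A B C D F : K) (d : Ext A D) (d' : Ext B F)
         (f' : Mor D B) (f : Mor B A) (g' : Mor F C) (g : Mor C B),
    realizes d f' f -> realizes d' g' g ->
    exists (E : K) (h' : Mor E C) (dd : Mor E D) (e : Mor F E) (d'' : Ext A E),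
      (realizes d'' h' (f ∘ g) /\ g ∘ h' = f' ∘ dd /\ h' ∘ e = g' /\
          realizes (pull f' d') e dd /\ push dd d'' = d /\ pull f d'' = push e d').

Definition is_inflation (A B : K) (x : Mor A B) : Prop :=
  exists (C : K) (y : Mor B C) (d : Ext C A), realizes d x y.
Definition is_deflation (B C : K) (y : Mor B C) : Prop :=
  exists (A : K) (x : Mor A B) (d : Ext C A), realizes d x y.
End ExtAxioms.

Record ExtriCat := {
  edata :> ExtData;
  et1 : ET1 edata;
  et2 : ET2 edata;
  et3 : ET3 edata;
  et3op : ET3op edata;
  et4 : ET4 edata;
  et4op : ET4op edata }.

Definition additive_autoequivalence (K : AddCat) (S : K -> K)
    (F : forall X Y : K, Mor X Y -> Mor (S X) (S Y)) : Prop :=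
  ((forall X : K, F X X (idm X) = idm (S X)) /\
      (forall (X Y Z : K) (g : Mor Y Z) (f : Mor X Y),
          F X Z (g ∘ f) = F Y Z g ∘ F X Y f) /\
      (forall (X Y : K) (f f' : Mor X Y), F X Y (f + f') = F X Y f + F X Y f') /\
      (forall X Y : K, injective (F X Y)) /\
      (forall (X Y : K) (g : Mor (S X) (S Y)), exists f, F X Y f = g) /\
      (forall Y : K, exists (X : K) (u : Mor (S X) Y), is_iso u)).
Arguments additive_autoequivalence {K} S F.

(* Every extension realized by a sequence through the zero object, such as
   [delta X] realized by [X -> 0 -> Sigma X], is "nondegenerate": [c^*] and
   [a_*] applied to it are injective on morphisms, because a morphism killing
   it lifts to a morphism of conflations from a split one and so factors
   through [0].  Hence [Sigma f] is the unique morphism with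
   [f_* delta_X = (Sigma f)^* delta_Y], which gives functoriality, additivity
   and faithfulness; (ET3)^op gives fullness.  Finally, if [0 -> Y] is the
   deflation of a conflation [A -> 0 -> Y], then (ET3) in both directions
   compares it with [A -> 0 -> Sigma A], and nondegeneracy makes the two
   comparison maps mutually inverse, so [Y] is isomorphic to [Sigma A]. *)
From HB Require Import structures.
From mathcomp Require Import all_boot all_algebra.
Set Implicit Arguments. Unset Strict Implicit. Unset Printing Implicit Defensive.
Local Open Scope ring_scope.
Import GRing.Theory.

Section AdditiveMaps.
Variables (U V : zmodType) (f : U -> V).
Hypothesis fD : {morph f : x y / x + y}.

Lemma addmorph0 : f 0 = 0.
Proof.
have f00 : f 0 + f 0 = f 0 + 0 by rewrite -fD !addr0.
exact: addrI f00.
Qed.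

Lemma addmorph_inj : (forall x, f x = 0 -> x = 0) -> injective f.
Proof.
move=> ker0 x y fxy; apply/eqP; rewrite -subr_eq0; apply/eqP/ker0.
have fN : f (- y) = - f y by apply/eqP; rewrite -addr_eq0 -fD addNr addmorph0.
by rewrite fD fN fxy subrr.
Qed.
End AdditiveMaps.

Section Extriangulated.
Variable K : ExtriCat.

Lemma cmpA (W X Y Z : K) (h : Mor Y Z) (g : Mor X Y) (f : Mor W X) :
  h ∘ (g ∘ f) = (h ∘ g) ∘ f.
Proof. by case: (preaddP K) => H _; apply: H. Qed.

Lemma cmp1l (X Y : K) (f : Mor X Y) : idm Y ∘ f = f.
Proof. by case: (preaddP K) => _ [H _]; apply: H. Qed.

Lemma cmp1r (X Y : K) (f : Mor X Y) : f ∘ idm X = f.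
Proof. by case: (preaddP K) => _ [_ [H _]]; apply: H. Qed.

Lemma cmpDl (X Y Z : K) (g g' : Mor Y Z) (f : Mor X Y) :
  (g + g') ∘ f = g ∘ f + g' ∘ f.
Proof. by case: (preaddP K) => _ [_ [_ [H _]]]; apply: H. Qed.

Lemma cmpDr (X Y Z : K) (g : Mor Y Z) (f f' : Mor X Y) :
  g ∘ (f + f') = g ∘ f + g ∘ f'.
Proof. by case: (preaddP K) => _ [_ [_ [_ H]]]; apply: H. Qed.

Lemma cmp0l {X Y Z : K} (f : Mor X Y) : (0 : Mor Y Z) ∘ f = 0.
Proof. exact: addmorph0 (fun g g' : Mor Y Z => cmpDl g g' f). Qed.

Lemma cmp0r {X Y Z : K} (g : Mor Y Z) : g ∘ (0 : Mor X Y) = 0.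
Proof. exact: addmorph0 (cmpDr g). Qed.

Lemma mor_to_zo (X : K) (f g : Mor X zo) : f = g.
Proof. by case: (zoP (a := K) X) => _ H; apply: H. Qed.

Lemma mor_from_zo (X : K) (f g : Mor zo X) : f = g.
Proof. by case: (zoP (a := K) X) => H _; apply: H. Qed.

Lemma pushD (C A A' : K) (a a' : Mor A A') (d : Ext C A) :
  push (a + a') d = push a d + push a' d.
Proof. by case: (et1 K) => _ [H _]; apply: H. Qed.

Lemma pullD (C C' A : K) (c c' : Mor C' C) (d : Ext C A) :
  pull (c + c') d = pull c d + pull c' d.
Proof. by case: (et1 K) => _ [_ [_ [H _]]]; apply: H. Qed.

Lemma push1 (C A : K) (d : Ext C A) : push (idm A) d = d.
Proof. by case: (et1 K) => _ [_ [_ [_ [H _]]]]; apply: H. Qed.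

Lemma pull1 (C A : K) (d : Ext C A) : pull (idm C) d = d.
Proof. by case: (et1 K) => _ [_ [_ [_ [_ [H _]]]]]; apply: H. Qed.

Lemma pushM (C A A' A'' : K) (a : Mor A A') (a' : Mor A' A'') (d : Ext C A) :
  push (a' ∘ a) d = push a' (push a d).
Proof. by case: (et1 K) => _ [_ [_ [_ [_ [_ [H _]]]]]]; apply: H. Qed.

Lemma pullM (C C' C'' A : K) (c : Mor C' C) (c' : Mor C'' C') (d : Ext C A) :
  pull (c ∘ c') d = pull c' (pull c d).
Proof. by case: (et1 K) => _ [_ [_ [_ [_ [_ [_ [H _]]]]]]]; apply: H. Qed.

Lemma push_pull (C C' A A' : K) (a : Mor A A') (c : Mor C' C) (d : Ext C A) :
  push a (pull c d) = pull c (push a d).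
Proof. by case: (et1 K) => _ [_ [_ [_ [_ [_ [_ [_ H]]]]]]]; apply: H. Qed.

Lemma realizes_biprod (A C P : K) (i1 : Mor A P) (i2 : Mor C P)
    (p1 : Mor P A) (p2 : Mor P C) :
  is_biprod i1 i2 p1 p2 -> realizes (0 : Ext C A) i1 p2.
Proof. by case: (et2 K) => _ [H _]; apply: H. Qed.

Lemma realizes_lift (A B C A' B' C' : K) (d : Ext C A) (d' : Ext C' A')
    (x : Mor A B) (y : Mor B C) (x' : Mor A' B') (y' : Mor B' C')
    (a : Mor A A') (c : Mor C C') :
  realizes d x y -> realizes d' x' y' -> push a d = pull c d' ->
  exists b : Mor B B', b ∘ x = x' ∘ a /\ c ∘ y = y' ∘ b.
Proof. by case: (et2 K) => [[_ [_ H]] _]; apply: H. Qed.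

Section ConeOfZero.
Variables (A C : K) (d : Ext C A) (x : Mor A zo) (y : Mor zo C).
Hypothesis d_xy : realizes d x y.

Lemma pull_inj (C' : K) : injective (fun c : Mor C' C => pull c d).
Proof.
apply: addmorph_inj => [c c'|c dc0]; first exact: pullD.
have [P [i1 [i2 [p1 [p2 bP]]]]] := biprodP (a := K) A C'.
have [b [_ cp2]] := realizes_lift (realizes_biprod bP) d_xy
  (etrans (push1 _) (esym dc0)).
have [_ [p2i2 _]] := bP.
by rewrite -(cmp1r c) -p2i2 cmpA cp2 -cmpA (mor_to_zo (b ∘ i2) 0) cmp0r.
Qed.

Lemma push_inj (A' : K) : injective (fun a : Mor A A' => push a d).
Proof.
apply: addmorph_inj => [a a'|a da0]; first exact: pushD.
have [P [i1 [i2 [p1 [p2 bP]]]]] := biprodP (a := K) A' C.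
have [b [bx _]] := realizes_lift d_xy (realizes_biprod bP)
  (etrans da0 (esym (pull1 _))).
have [p1i1 _] := bP.
by rewrite -(cmp1l a) -p1i1 -cmpA -bx (mor_from_zo b 0) cmp0l cmp0r.
Qed.
End ConeOfZero.

Lemma zero_cones_iso (A C C' : K) (d : Ext C A) (d' : Ext C' A)
    (x : Mor A zo) (y : Mor zo C) (x' : Mor A zo) (y' : Mor zo C') :
  realizes d x y -> realizes d' x' y' -> exists u : Mor C C', is_iso u.
Proof.
move=> dxy dxy'.
have [c [_ dc]] := et3 dxy dxy' (a := idm A) (b := 0 : Mor zo zo) (mor_to_zo _ _).
have [c' [_ dc']] := et3 dxy' dxy (a := idm A) (b := 0 : Mor zo zo) (mor_to_zo _ _).
move: dc dc'; rewrite !push1 => dc dc'.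
exists c, c'; split.
- by apply: (pull_inj dxy); rewrite /= pullM -dc' -dc pull1.
- by apply: (pull_inj dxy'); rewrite /= pullM -dc -dc' pull1.
Qed.
End Extriangulated.

Section Suspension.
Variables (K : ExtriCat) (Sig : K -> K) (delta : forall X : K, Ext (Sig X) X).
Hypothesis delta_realized :
  forall X : K, realizes (delta X) (0 : Mor X zo) (0 : Mor zo (Sig X)).
Variable SigF : forall X Y : K, Mor X Y -> Mor (Sig X) (Sig Y).
Arguments SigF : clear implicits.
Hypothesis SigF_delta : forall (X Y : K) (f : Mor X Y),
  push f (delta X) = pull (SigF X Y f) (delta Y).

Lemma SigF_unique (X Y : K) (f : Mor X Y) (g : Mor (Sig X) (Sig Y)) :
  push f (delta X) = pull g (delta Y) -> SigF X Y f = g.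
Proof. by rewrite SigF_delta => /(pull_inj (delta_realized Y)). Qed.

Lemma SigF1 (X : K) : SigF X X (idm X) = idm (Sig X).
Proof. by apply: SigF_unique; rewrite push1 pull1. Qed.

Lemma SigFM (X Y Z : K) (g : Mor Y Z) (f : Mor X Y) :
  SigF X Z (g ∘ f) = SigF Y Z g ∘ SigF X Y f.
Proof.
by apply: SigF_unique; rewrite pushM SigF_delta push_pull SigF_delta pullM.
Qed.

Lemma SigFD (X Y : K) (f f' : Mor X Y) :
  SigF X Y (f + f') = SigF X Y f + SigF X Y f'.
Proof. by apply: SigF_unique; rewrite pushD !SigF_delta pullD. Qed.

Lemma SigF_inj (X Y : K) : injective (SigF X Y).
Proof.
move=> f f' eq_SigF; apply: (push_inj (delta_realized X)).
by rewrite /= !SigF_delta eq_SigF.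
Qed.

Lemma SigF_full (X Y : K) (g : Mor (Sig X) (Sig Y)) : exists f, SigF X Y f = g.
Proof.
have [f [_ fg]] := et3op (delta_realized X) (delta_realized Y)
  (b := 0 : Mor zo zo) (c := g) (etrans (cmp0r _) (esym (cmp0r _))).
by exists f; apply: SigF_unique.
Qed.

Lemma Sig_ess_surj (Y : K) :
  is_deflation (0 : Mor zo Y) -> exists (X : K) (u : Mor (Sig X) Y), is_iso u.
Proof.
by case=> [A [x [d dxy]]]; exists A; apply: zero_cones_iso (delta_realized A) dxy.
Qed.
End Suspension.

Theorem proposition3p7 (K : ExtriCat)
  (Hinf : forall X : K, is_inflation (0 : Mor X zo))
  (Hdef : forall X : K, is_deflation (0 : Mor zo X))
  (Sig : K -> K) (delta : forall X : K, Ext (Sig X) X)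
  (Hdelta : forall X : K, realizes (delta X) (0 : Mor X zo) (0 : Mor zo (Sig X)))
  (SigF : forall X Y : K, Mor X Y -> Mor (Sig X) (Sig Y))
  (HSigF : forall (X Y : K) (f : Mor X Y),
      push f (delta X) = pull (SigF X Y f) (delta Y)) :
  additive_autoequivalence Sig SigF.
Proof.
(* [Hinf] is redundant: [Hdelta X] already exhibits [X -> 0] as an inflation. *)
split; first by move=> *; apply: (SigF1 Hdelta HSigF).
split; first by move=> *; apply: (SigFM Hdelta HSigF).
split; first by move=> *; apply: (SigFD Hdelta HSigF).
split; first by move=> *; apply: (SigF_inj Hdelta HSigF).
split; first by move=> *; apply: (SigF_full Hdelta HSigF).
by move=> Y; apply: (Sig_ess_surj Hdelta).
Qed.
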